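(* Let $[a,b]\subset\mathbb{R}$ be a compact interval and let $E\subset[a,b]$ be a set of Lebesgue measure zero with $a,b\notin E$. Let $F$ be a real valued function defined and differentiable on $[a,b]\setminus E$, with derivative $f$ there (at points of $E$, $F$ and $f$ may take the values $\pm\infty$ or be undefined). Define $F_{ex},f_{ex}:[a,b]\to\mathbb{R}$ by $F_{ex}(x)=F(x)$, $f_{ex}(x)=f(x)$ for $x\in[a,b]\setminus E$ and $F_{ex}(x)=f_{ex}(x)=0$ for $x\in E$. Suppose $F$ is basically summable ($\mathrm{BS}_\delta$) on $E$ to a real number $\Re$, i.e. for every $\varepsilon>0$ there is a gauge $\delta:[a,b]\to\mathbb{R}_+$ such that $$\Big|\sum_{([a_i,b_i],x_i)\in P|_E}\big(F_{ex}(b_i)-F_{ex}(a_i)\big)-\Re\Big|<\varepsilon$$ for every $\delta$-fine tagged partition $P$ of $[a,b]$. Then $f_{ex}$ is generalized Riemann integrable on $[a,b]$, i.e. there is a real number $\mathcal{F}=\mathcal{R}\text{-}\int_a^b f_{ex}(x)\,dx$ such that for every $\varepsilon>0$ there is a gauge $\delta:[a,b]\to\mathbb{R}_+$ with $\big|\sum_i f_{ex}(x_i)(b_i-a_i)-\mathcal{F}\big|<\varepsilon$ for every $\delta$-fine tagged partition $([a_i,b_i],x_i)_i$ of $[a,b]$; and moreover $$\int_a^b f(x)\,dx = \mathcal{R}\text{-}\int_a^b f_{ex}(x)\,dx+\Re,$$ where $\int_a^b f(x)\,dx$ denotes $\Delta F([a,b])=F(b)-F(a)$.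
   Context: A tagged partition $P$ of $[a,b]$ is a finite collection of interval-point pairs $([a_i,b_i],x_i)_{i\le\nu}$ such that the compact intervals $[a_i,b_i]$ are non-overlapping, their union is $[a,b]$, and each tag $x_i\in[a,b]$. A gauge is a function $\delta:[a,b]\to\mathbb{R}_+$; a pair $([a_i,b_i],x_i)$ is $\delta$-fine if $[a_i,b_i]\subseteq(x_i-\delta(x_i),x_i+\delta(x_i))$, and a partition is $\delta$-fine if all its pairs are. For $E\subseteq[a,b]$, the restriction $P|_E$ is the set of pairs $([a_i,b_i],x_i)\in P$ with $[a_i,b_i]\cap E\neq\emptyset$ and $x_i\in E$. In the paper, the integral of $f$ over a compact interval $I=[u,v]$ is defined to be the value $\Delta F(I)=F(v)-F(u)$ of the interval function associated to the antiderivative $F$ of $f$. *)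

From Stdlib Require Import Reals List Classical ClassicalEpsilon Lra.
Open Scope R_scope.

(* A tagged interval-point pair ([u,v], x) is encoded as ((u, v), x). *)

Definition null_set (E : R -> Prop) : Prop :=
  forall eps : R, 0 < eps ->
    exists c d : nat -> R,
      (forall n, c n <= d n) /\
      (forall x, E x -> exists n, c n < x < d n) /\
      (forall N, sum_f_R0 (fun n => d n - c n) N <= eps).

Definition tagged_partition (a b : R) (P : list (R * R * R)) : Prop :=
  (forall u v x, In (u, v, x) P -> u < v /\ u <= x <= v) /\
  (forall i j, (i < length P)%nat -> (j < length P)%nat -> i <> j ->
     forall y,
       ~ (fst (fst (nth i P (0,0,0))) < y < snd (fst (nth i P (0,0,0))) /\
          fst (fst (nth j P (0,0,0))) < y < snd (fst (nth j P (0,0,0))))) /\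
  (forall y, a <= y <= b <-> exists u v x, In (u, v, x) P /\ u <= y <= v).

Definition gauge (a b : R) (delta : R -> R) : Prop :=
  forall x, a <= x <= b -> 0 < delta x.

Definition fine (delta : R -> R) (P : list (R * R * R)) : Prop :=
  forall u v x, In (u, v, x) P -> x - delta x < u /\ v < x + delta x.

Definition pdec (Q : Prop) : bool :=
  if excluded_middle_informative Q then true else false.

Definition ext (E : R -> Prop) (g : R -> R) (x : R) : R :=
  if pdec (E x) then 0 else g x.

Definition riemann_sum (g : R -> R) (P : list (R * R * R)) : R :=
  fold_right (fun p s => g (snd p) * (snd (fst p) - fst (fst p)) + s) 0 P.

(* Sum over the restriction P|_E of G(v_i) - G(u_i): pairs with
   [u_i,v_i] meeting E and tag x_i in E. *)
Definition restr_sum (E : R -> Prop) (G : R -> R) (P : list (R * R * R)) : R :=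
  fold_right (fun p s =>
     (if pdec ((exists y, fst (fst p) <= y <= snd (fst p) /\ E y) /\ E (snd p))
      then G (snd (fst p)) - G (fst (fst p)) else 0) + s) 0 P.

Definition BS_delta (a b : R) (E : R -> Prop) (F : R -> R) (Re : R) : Prop :=
  forall eps, 0 < eps -> exists delta, gauge a b delta /\
    forall P, tagged_partition a b P -> fine delta P ->
      Rabs (restr_sum E (ext E F) P - Re) < eps.

Definition GR_integral (a b : R) (g : R -> R) (I : R) : Prop :=
  forall eps, 0 < eps -> exists delta, gauge a b delta /\
    forall P, tagged_partition a b P -> fine delta P ->
      Rabs (riemann_sum g P - I) < eps.

(* F (defined on D) is differentiable on D with derivative f, the
   difference quotient being taken over points of the domain D
   (one-sided at the endpoints a, b). *)
Definition deriv_on (D : R -> Prop) (F f : R -> R) : Prop :=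
  forall x, D x -> forall eps, 0 < eps -> exists del, 0 < del /\
    forall y, D y -> Rabs (y - x) < del ->
      Rabs (F y - F x - f x * (y - x)) <= eps * Rabs (y - x).

(* Take I := F b - F a - Re.  Given a fine partition P, split off from each
   pair whose tag avoids E a very short cap at every endpoint lying in E; the
   new endpoints are chosen off E, which is possible because a null set
   contains no interval.  The refined partition P' is fine for the gauge of
   the BS condition, so its restricted sum is close to Re.  Every other pair
   of P' has its tag and endpoints off E, so by differentiability its
   increment of F is close to its Riemann term.  As the increments over P'
   telescope to F b - F a and the caps change the Riemann sum of ext E f by
   arbitrarily little, the Riemann sum of P is close to F b - F a - Re. *)

From Stdlib Require Import Reals Lra Lia List Classical ClassicalEpsilon Rtopology.
Open Scope R_scope.

Definition lsum {A : Type} (h : A -> R) (l : list A) : R :=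
  fold_right (fun p s => h p + s) 0 l.

Lemma lsum_cons {A} (h : A -> R) p l : lsum h (p :: l) = h p + lsum h l.
Proof. reflexivity. Qed.

Lemma lsum_app {A} (h : A -> R) l1 l2 : lsum h (l1 ++ l2) = lsum h l1 + lsum h l2.
Proof. unfold lsum. induction l1 as [|p l1 IH]; cbn; [lra|]. rewrite IH; lra. Qed.

Lemma lsum_flat_map {A B} (h : B -> R) (g : A -> list B) l :
  lsum h (flat_map g l) = lsum (fun p => lsum h (g p)) l.
Proof.
  induction l as [|p l IH]; [reflexivity|].
  cbn [flat_map]. now rewrite lsum_app, lsum_cons, IH.
Qed.

Lemma lsum_le {A} (h1 h2 : A -> R) l :
  (forall p, In p l -> h1 p <= h2 p) -> lsum h1 l <= lsum h2 l.
Proof.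
  induction l as [|p l IH]; intros H; cbn; [lra|].
  pose proof (H p (in_eq p l)). pose proof (IH (fun q Hq => H q (in_cons p q l Hq))).
  unfold lsum in *; lra.
Qed.

Lemma lsum_const {A} (k : R) (l : list A) : lsum (fun _ => k) l = INR (length l) * k.
Proof.
  induction l as [|p l IH]; cbn -[INR]; [cbn; lra|].
  unfold lsum in IH; rewrite IH, S_INR; lra.
Qed.

Lemma lsum_nonneg {A} (h : A -> R) l : (forall p, In p l -> 0 <= h p) -> 0 <= lsum h l.
Proof.
  intros H. rewrite <- (Rmult_0_r (INR (length l))), <- lsum_const. now apply lsum_le.
Qed.

Lemma lsum_minus {A} (h1 h2 : A -> R) l :
  lsum h1 l - lsum h2 l = lsum (fun p => h1 p - h2 p) l.
Proof. unfold lsum. induction l as [|p l IH]; cbn; lra. Qed.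

Lemma lsum_scal {A} (k : R) (h : A -> R) l : lsum (fun p => k * h p) l = k * lsum h l.
Proof. unfold lsum. induction l as [|p l IH]; cbn; [lra|]. rewrite IH; lra. Qed.

Lemma lsum_abs {A} (h : A -> R) l : Rabs (lsum h l) <= lsum (fun p => Rabs (h p)) l.
Proof.
  induction l as [|p l IH]; cbn; [rewrite Rabs_R0; lra|].
  eapply Rle_trans; [apply Rabs_triang|]. unfold lsum in IH; lra.
Qed.

Lemma small_radii {A} (h d : A -> R) (l : list A) c : 0 < c ->
  (forall p, 0 <= h p) -> (forall p, In p l -> 0 < d p) ->
  exists r, (forall p, In p l -> 0 < r p <= d p) /\ lsum (fun p => h p * r p) l <= c.
Proof.
  intros Hc Hh Hd. set (N := INR (length l)).
  assert (HN : 0 <= N) by apply pos_INR.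
  exists (fun p => Rmin (d p) (c / ((h p + 1) * (N + 1)))). split.
  - intros p Hp. split; [|apply Rmin_l].
    apply Rmin_glb_lt; [exact (Hd p Hp)|]. specialize (Hh p).
    apply Rdiv_lt_0_compat; nra.
  - apply Rle_trans with (lsum (fun _ => c / (N + 1)) l).
    + apply lsum_le. intros p _. specialize (Hh p).
      pose proof (Rmin_r (d p) (c / ((h p + 1) * (N + 1)))).
      apply Rle_trans with (h p * (c / ((h p + 1) * (N + 1)))); [now apply Rmult_le_compat_l|].
      unfold Rdiv. rewrite Rinv_mult.
      assert (0 < / (N + 1)) by (apply Rinv_0_lt_compat; lra).
      assert (h p * / (h p + 1) <= 1)
        by (apply (Rmult_le_reg_r (h p + 1)); [lra|]; field_simplify; lra).
      replace (h p * (c * (/ (h p + 1) * / (N + 1))))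
        with ((h p * / (h p + 1)) * (c * / (N + 1))) by ring.
      assert (0 < c * / (N + 1)) by (apply Rmult_lt_0_compat; lra). nra.
    + rewrite lsum_const. fold N.
      apply (Rmult_le_reg_r (N + 1)); [lra|]. field_simplify; lra.
Qed.

Lemma in_remove_app {A} (l1 l2 : list A) p q : In q (l1 ++ l2) -> In q (l1 ++ p :: l2).
Proof. intros Hq. apply in_app_or in Hq. apply in_or_app. cbn. tauto. Qed.

Lemma interval_cover_length : forall (L : list (R * R)),
  (forall i, In i L -> fst i <= snd i) -> forall c d, c <= d ->
  (forall y, c <= y <= d -> exists i, In i L /\ fst i < y < snd i) ->
  d - c <= lsum (fun i => snd i - fst i) L.
Proof.
  intros L. remember (length L) as n eqn:Hn. revert L Hn.
  induction n as [n IH] using (well_founded_induction Wf_nat.lt_wf).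
  intros L Hn Hle c d Hcd Hcov.
  destruct (Hcov d) as [[ci di] [Hin Hi]]; [lra|]. cbn in Hi.
  destruct (in_split _ _ Hin) as [l1 [l2 ->]].
  assert (Hrest : forall i, In i (l1 ++ l2) -> In i (l1 ++ (ci, di) :: l2))
    by apply in_remove_app.
  assert (Hnn : 0 <= lsum (fun i => snd i - fst i) (l1 ++ l2)).
  { apply lsum_nonneg. intros i Hi'. specialize (Hle i (Hrest i Hi')). lra. }
  rewrite lsum_app, lsum_cons. rewrite lsum_app in Hnn. cbn.
  destruct (Rlt_dec ci c); [lra|].
  enough (ci - c <= lsum (fun i => snd i - fst i) (l1 ++ l2)) by (rewrite lsum_app in *; lra).
  apply (IH (length (l1 ++ l2))); [subst n; rewrite !length_app; cbn; lia | reflexivity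
    | intros i Hi'; apply Hle, Hrest, Hi' | lra | ].
  intros y Hy. destruct (Hcov y) as [i [Hi' Hiy]]; [lra|].
  exists i. split; auto. apply in_app_or in Hi'. apply in_or_app.
  destruct Hi' as [Hi'|[<-|Hi']]; auto. cbn in Hiy. lra.
Qed.

Lemma lsum_interval_lengths (c d : nat -> R) M :
  lsum (fun i => snd i - fst i) (map (fun n => (c n, d n)) (seq 0 (S M)))
  = sum_f_R0 (fun n => d n - c n) M.
Proof.
  induction M as [|M IH]; [cbn; lra|].
  rewrite seq_S, map_app, lsum_app, IH. cbn. lra.
Qed.

Lemma INR_list_bounded (l : list R) : (forall r, In r l -> exists n, r = INR n) ->
  exists M, forall r n, In r l -> r = INR n -> (n <= M)%nat.
Proof.
  induction l as [|r0 l IH]; intros H.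
  - exists 0%nat. intros r n [].
  - destruct IH as [M HM]; [intros; apply H; cbn; auto|].
    destruct (H r0) as [n0 Hn0]; [cbn; auto|].
    exists (Nat.max M n0). intros r n [<-|Hr] Hrn.
    + subst. apply INR_eq in Hrn. lia.
    + specialize (HM r n Hr Hrn). lia.
Qed.

(* If E contained (c, d), Heine-Borel would turn a cover of total length
   (d - c) / 4 into a finite cover of the middle half of [c, d],
   contradicting [interval_cover_length]. *)
Lemma exists_notin_null_set (E : R -> Prop) c d : null_set E -> c < d ->
  exists y, c < y < d /\ ~ E y.
Proof.
  intros HN Hcd. apply NNPP. intro Hno.
  assert (HE : forall y, c < y < d -> E y).
  { intros y Hy. apply NNPP. intro HnE. apply Hno. now exists y. }
  set (e := (d - c) / 4).
  destruct (HN e) as [cn [dn [Hle [Hcov Hsum]]]]; [unfold e; lra|].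
  assert (Hdom : forall r, (exists y, exists n, r = INR n /\ cn n < y < dn n) ->
                   exists n, r = INR n).
  { intros r [y [n [Hr _]]]. now exists n. }
  set (fam := mkfamily (fun r => exists n, r = INR n)
                (fun r y => exists n, r = INR n /\ cn n < y < dn n) Hdom).
  destruct (compact_P3 (c + e) (d - e) fam) as [D [HcovD [l Hl]]].
  { split.
    - intros y Hy. destruct (Hcov y) as [n Hn]; [apply HE; unfold e in Hy; lra|].
      exists (INR n). cbn. now exists n.
    - intros r y [n [Hr Hy]].
      assert (Hp : 0 < Rmin (y - cn n) (dn n - y)) by (apply Rmin_case; lra).
      exists (mkposreal _ Hp). intros z Hz. unfold disc in Hz. cbn in Hz.
      exists n. split; auto. apply Rabs_def2 in Hz.
      pose proof (Rmin_l (y - cn n) (dn n - y)). pose proof (Rmin_r (y - cn n) (dn n - y)).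
      lra. }
  destruct (INR_list_bounded l) as [M HM].
  { intros r Hr. apply Hl in Hr. destruct Hr as [[n Hn] _]. now exists n. }
  enough (d - e - (c + e) <= sum_f_R0 (fun n => dn n - cn n) M)
    by (specialize (Hsum M); unfold e in *; lra).
  rewrite <- lsum_interval_lengths. apply interval_cover_length; [|unfold e; lra|].
  - intros i Hi. apply in_map_iff in Hi. destruct Hi as [n [<- _]]. apply Hle.
  - intros y Hy. destruct (HcovD y Hy) as [r [[n [Hr Hny]] HD]].
    exists (cn n, dn n). split; auto.
    apply in_map_iff. exists n. split; auto. apply in_seq.
    assert (Hrl : In r l) by (apply Hl; split; auto; now exists n).
    specialize (HM r n Hrl Hr). lia.
Qed.

Definition pu (p : R * R * R) : R := fst (fst p).
Definition pv (p : R * R * R) : R := snd (fst p).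
Definition pt (p : R * R * R) : R := snd p.

(* [tagged_partition] with the index-based disjointness condition replaced by
   a membership-based one; duplicated pairs are excluded by [NoDup]. *)
Definition tagged_partition_mem (a b : R) (P : list (R * R * R)) : Prop :=
  (forall p, In p P -> pu p < pv p /\ pu p <= pt p <= pv p) /\ NoDup P /\
  (forall p q, In p P -> In q P -> p <> q -> forall y,
      ~ (pu p < y < pv p /\ pu q < y < pv q)) /\
  (forall y, a <= y <= b <-> exists p, In p P /\ pu p <= y <= pv p).

Lemma tagged_partition_memE a b P : tagged_partition a b P <-> tagged_partition_mem a b P.
Proof.
  split.
  - intros [H1 [H2 H3]].
    assert (H1' : forall p, In p P -> pu p < pv p /\ pu p <= pt p <= pv p)
      by (intros [[u v] x] Hp; exact (H1 u v x Hp)).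
    split; [exact H1'|]. split; [|split].
    + apply (NoDup_nth P (0,0,0)). intros i j Hi Hj Heq.
      destruct (Nat.eq_dec i j) as [|Hne]; auto. exfalso.
      specialize (H1' _ (nth_In P (0,0,0) Hi)).
      apply (H2 i j Hi Hj Hne ((pu (nth i P (0,0,0)) + pv (nth i P (0,0,0))) / 2)).
      rewrite <- Heq. unfold pu, pv in *. lra.
    + intros p q Hp Hq Hne y.
      destruct (In_nth _ _ (0,0,0) Hp) as [i [Hi <-]].
      destruct (In_nth _ _ (0,0,0) Hq) as [j [Hj <-]].
      apply H2; auto. now intros ->.
    + intros y. rewrite H3. split.
      * intros [u [v [x [Hin Hy]]]]. now exists (u, v, x).
      * intros [[[u v] x] [Hin Hy]]. now exists u, v, x.
  - intros [H1 [H2 [H3 H4]]]. split; [|split].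
    + intros u v x Hin. exact (H1 _ Hin).
    + intros i j Hi Hj Hne y. apply H3; try apply nth_In; auto.
      intro Heq. apply Hne. exact (proj1 (NoDup_nth P (0,0,0)) H2 i j Hi Hj Heq).
    + intros y. rewrite H4. split.
      * intros [[[u v] x] [Hin Hy]]. now exists u, v, x.
      * intros [u [v [x [Hin Hy]]]]. now exists (u, v, x).
Qed.

Lemma partition_mem_bounds a b P : tagged_partition_mem a b P ->
  forall p, In p P -> a <= pu p /\ pv p <= b.
Proof.
  intros [H1 [_ [_ H4]]] p Hp. destruct (H1 p Hp).
  split; apply H4; exists p; split; auto; lra.
Qed.

Lemma partition_mem_single a b x : a < b -> a <= x <= b ->
  tagged_partition_mem a b ((a, b, x) :: nil).
Proof.
  intros Hab Hx. unfold pu, pv, pt. split; [|split; [|split]].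
  - intros p [<-|[]]. cbn. lra.
  - repeat constructor. intros [].
  - intros p q [<-|[]] [<-|[]]. congruence.
  - intros y. split.
    + intros Hy. exists (a, b, x). cbn. auto.
    + intros [p [[<-|[]] Hy]]. exact Hy.
Qed.

Lemma partition_mem_app a b c P1 P2 : a < c -> c < b ->
  tagged_partition_mem a c P1 -> tagged_partition_mem c b P2 ->
  tagged_partition_mem a b (P1 ++ P2).
Proof.
  intros Hac Hcb HP1 HP2.
  pose proof (partition_mem_bounds _ _ _ HP1) as B1.
  pose proof (partition_mem_bounds _ _ _ HP2) as B2.
  destruct HP1 as [A1 [A2 [A3 A4]]], HP2 as [C1 [C2 [C3 C4]]].
  split; [|split; [|split]].
  - intros p Hp. apply in_app_or in Hp. destruct Hp; auto.
  - apply NoDup_app; auto. intros p Hp1 Hp2.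
    specialize (B1 p Hp1). specialize (B2 p Hp2). specialize (A1 p Hp1). lra.
  - intros p q Hp Hq Hne y Hy. apply in_app_or in Hp, Hq.
    destruct Hp as [Hp|Hp], Hq as [Hq|Hq].
    + exact (A3 p q Hp Hq Hne y Hy).
    + specialize (B1 p Hp). specialize (B2 q Hq). lra.
    + specialize (B2 p Hp). specialize (B1 q Hq). lra.
    + exact (C3 p q Hp Hq Hne y Hy).
  - intros y. split.
    + intros Hy. destruct (Rle_dec y c).
      * destruct (proj1 (A4 y)) as [p [Hp Hpy]]; [lra|].
        exists p. split; auto. apply in_or_app; auto.
      * destruct (proj1 (C4 y)) as [p [Hp Hpy]]; [lra|].
        exists p. split; auto. apply in_or_app; auto.
    + intros [p [Hp Hpy]]. apply in_app_or in Hp.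
      destruct Hp as [Hp|Hp]; [specialize (B1 p Hp)|specialize (B2 p Hp)]; lra.
Qed.

Lemma exists_list_argmax {A} (h : A -> R) (l : list A) : l <> nil ->
  exists p, In p l /\ forall q, In q l -> h q <= h p.
Proof.
  induction l as [|p0 l IH]; intros Hne; [congruence|].
  destruct l as [|p1 l].
  - exists p0. split; [now left|]. intros q [<-|[]]. lra.
  - destruct IH as [p [Hp Hmax]]; [discriminate|].
    destruct (Rle_dec (h p0) (h p)).
    + exists p. split; [now right|]. intros q [<-|Hq]; auto.
    + exists p0. split; [now left|]. intros q [<-|Hq]; [lra|].
      specialize (Hmax q Hq). lra.
Qed.

Lemma list_max_lt {A} (h : A -> R) (l : list A) m0 c : m0 < c ->
  (forall q, In q l -> h q < c) -> exists m, m0 <= m < c /\ forall q, In q l -> h q <= m.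
Proof.
  intros Hm0. induction l as [|q0 l IH]; intros H.
  - exists m0. split; [lra|]. intros q [].
  - destruct IH as [m [Hm Hmax]]; [intros; apply H; now right|].
    exists (Rmax m (h q0)). split; [split|].
    + eapply Rle_trans; [|apply Rmax_l]; lra.
    + apply Rmax_lub_lt; [lra|]. apply H. now left.
    + intros q [<-|Hq]; [apply Rmax_r|].
      eapply Rle_trans; [apply Hmax; auto|apply Rmax_l].
Qed.

Lemma closed_cover_endpoint (l : list (R * R * R)) a c : a < c ->
  (forall q, In q l -> pu q <= pv q <= c) ->
  (forall y, a <= y < c -> exists q, In q l /\ pu q <= y <= pv q) ->
  exists q, In q l /\ pu q <= c <= pv q.
Proof.
  intros Hac Hle Hcov. apply NNPP. intros Hno.
  assert (Hlt : forall q, In q l -> pv q < c).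
  { intros q Hq. destruct (Hle q Hq). destruct (Req_dec (pv q) c) as [He|]; [|lra].
    exfalso. apply Hno. exists q. split; auto. lra. }
  destruct (list_max_lt pv l a c Hac Hlt) as [m [Hm Hmax]].
  destruct (Hcov ((m + c) / 2)) as [q [Hq Hqy]]; [lra|].
  specialize (Hmax q Hq). lra.
Qed.

Lemma partition_mem_left_of_max a b l1 p l2 :
  tagged_partition_mem a b (l1 ++ p :: l2) ->
  (forall q, In q (l1 ++ p :: l2) -> pv q <= pv p) ->
  forall q, In q (l1 ++ l2) -> pv q <= pu p.
Proof.
  intros [H1 [H2 [H3 _]]] Hmax q Hq.
  pose proof (in_remove_app _ _ p _ Hq) as HqP.
  assert (Hp : In p (l1 ++ p :: l2)) by (apply in_or_app; right; now left).
  assert (Hqp : q <> p) by (intros ->; exact (NoDup_remove_2 _ _ _ H2 Hq)).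
  destruct (H1 p Hp), (H1 q HqP). specialize (Hmax q HqP).
  destruct (Rle_dec (pv q) (pu p)) as [|Hnot]; auto. exfalso.
  assert (Hm : Rmax (pu q) (pu p) < pv q) by (apply Rmax_lub_lt; lra).
  apply (H3 q p HqP Hp Hqp ((Rmax (pu q) (pu p) + pv q) / 2)).
  pose proof (Rmax_l (pu q) (pu p)). pose proof (Rmax_r (pu q) (pu p)). lra.
Qed.

Lemma partition_mem_remove_last a b l1 p l2 :
  tagged_partition_mem a b (l1 ++ p :: l2) -> a < pu p ->
  (forall q, In q (l1 ++ l2) -> pv q <= pu p) ->
  tagged_partition_mem a (pu p) (l1 ++ l2).
Proof.
  intros HP Hap Hbelow. pose proof (partition_mem_bounds _ _ _ HP) as Hbd.
  destruct HP as [H1 [H2 [H3 H4]]].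
  assert (HinP : forall q, In q (l1 ++ l2) -> In q (l1 ++ p :: l2)) by apply in_remove_app.
  assert (Hp : In p (l1 ++ p :: l2)) by (apply in_or_app; right; now left).
  destruct (H1 p Hp), (Hbd p Hp).
  assert (Hcov : forall y, a <= y < pu p -> exists q, In q (l1 ++ l2) /\ pu q <= y <= pv q).
  { intros y Hy. destruct (proj1 (H4 y)) as [q [Hq Hqy]]; [lra|].
    exists q. split; auto. apply in_app_or in Hq.
    apply in_or_app. destruct Hq as [Hq|[<-|Hq]]; auto. lra. }
  split; [|split; [|split]].
  - intros q Hq. exact (H1 q (HinP q Hq)).
  - exact (NoDup_remove_1 _ _ _ H2).
  - intros q r Hq Hr. exact (H3 q r (HinP q Hq) (HinP r Hr)).
  - intros y. split.
    + intros Hy. destruct (Rlt_dec y (pu p)); [apply Hcov; lra|].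
      replace y with (pu p) by lra. apply (closed_cover_endpoint _ a); [lra| |exact Hcov].
      intros q Hq. destruct (H1 q (HinP q Hq)). specialize (Hbelow q Hq). lra.
    + intros [q [Hq Hqy]]. specialize (Hbelow q Hq). specialize (Hbd q (HinP q Hq)). lra.
Qed.

Lemma partition_mem_last a b P : a < b -> tagged_partition_mem a b P ->
  exists l1 p l2, P = l1 ++ p :: l2 /\ pv p = b /\
    (pu p = a /\ l1 ++ l2 = nil \/ a < pu p /\ tagged_partition_mem a (pu p) (l1 ++ l2)).
Proof.
  intros Hab HP. pose proof (partition_mem_bounds _ _ _ HP) as Hbd.
  assert (HPnil : P <> nil)
    by (intros ->; destruct (proj1 (proj2 (proj2 (proj2 HP)) a)) as [p [[] _]]; lra).
  destruct (exists_list_argmax pv P HPnil) as [p [Hp Hmax]].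
  destruct (in_split _ _ Hp) as [l1 [l2 ->]].
  pose proof (partition_mem_left_of_max _ _ _ _ _ HP Hmax) as Hbelow.
  exists l1, p, l2. split; [reflexivity|]. split.
  { destruct (proj1 (proj2 (proj2 (proj2 HP)) b)) as [q [Hq Hqb]]; [lra|].
    specialize (Hmax q Hq). specialize (Hbd p Hp). lra. }
  destruct (Rle_dec (pu p) a) as [Hle|Hgt].
  - left. pose proof (Hbd p Hp). split; [lra|].
    destruct (l1 ++ l2) as [|q l] eqn:Heq; auto. exfalso.
    assert (HqP : In q (l1 ++ p :: l2)) by (apply in_remove_app; rewrite Heq; apply in_eq).
    specialize (Hbelow q (in_eq q l)). destruct (proj1 HP q HqP).
    specialize (Hbd q HqP). lra.
  - right. split; [lra|]. apply (partition_mem_remove_last _ b); auto; lra.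
Qed.

Lemma partition_mem_telescope (G : R -> R) a b P : a < b -> tagged_partition_mem a b P ->
  lsum (fun p => G (pv p) - G (pu p)) P = G b - G a.
Proof.
  remember (length P) as n eqn:Hn. revert P b Hn.
  induction n as [n IH] using (well_founded_induction Wf_nat.lt_wf).
  intros P b Hn Hab HP.
  destruct (partition_mem_last a b P Hab HP) as [l1 [p [l2 [-> [Hpb Hrest]]]]].
  assert (Hsplit : lsum (fun q => G (pv q) - G (pu q)) (l1 ++ p :: l2) =
      lsum (fun q => G (pv q) - G (pu q)) (l1 ++ l2) + (G b - G (pu p)))
    by (rewrite !lsum_app, lsum_cons, Hpb; lra).
  rewrite Hsplit. destruct Hrest as [[Hpa Hnil] | [Hap Hrest]].
  - rewrite Hnil, Hpa. cbn. lra.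
  - rewrite (IH (length (l1 ++ l2))) with (b := pu p); auto; [lra|].
    subst n. rewrite !length_app. cbn. lia.
Qed.

Lemma NoDup_flat_map {A B} (S : A -> list B) (P : list A) : NoDup P ->
  (forall p, In p P -> NoDup (S p)) ->
  (forall p1 p2 q, In p1 P -> In p2 P -> p1 <> p2 -> In q (S p1) -> ~ In q (S p2)) ->
  NoDup (flat_map S P).
Proof.
  induction P as [|p P IH]; intros HND HS Hdis; cbn; [constructor|].
  apply NoDup_cons_iff in HND as [Hnin HND].
  apply NoDup_app.
  - apply HS. now left.
  - apply IH; auto.
    + intros q Hq. apply HS. now right.
    + intros p1 p2 q H1 H2. apply Hdis; now right.
  - intros q Hq Hq2. apply in_flat_map in Hq2 as [p2 [Hp2 Hq2]].
    apply (Hdis p p2 q); auto; [now left|now right|]. now intros ->.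
Qed.

Lemma partition_mem_flat_map a b P (S : R * R * R -> list (R * R * R)) :
  tagged_partition_mem a b P ->
  (forall p, In p P -> tagged_partition_mem (pu p) (pv p) (S p)) ->
  tagged_partition_mem a b (flat_map S P).
Proof.
  intros HP HS.
  assert (HSb : forall p q, In p P -> In q (S p) -> pu p <= pu q /\ pv q <= pv p)
    by (intros p q Hp; exact (partition_mem_bounds _ _ _ (HS p Hp) q)).
  destruct HP as [H1 [H2 [H3 H4]]].
  split; [|split; [|split]].
  - intros q Hq. apply in_flat_map in Hq as [p [Hp Hq]]. exact (proj1 (HS p Hp) q Hq).
  - apply NoDup_flat_map; auto.
    + intros p Hp. exact (proj1 (proj2 (HS p Hp))).
    + intros p1 p2 q Hp1 Hp2 Hne Hq1 Hq2.
      destruct (proj1 (HS p1 Hp1) q Hq1).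
      pose proof (HSb p1 q Hp1 Hq1). pose proof (HSb p2 q Hp2 Hq2).
      apply (H3 p1 p2 Hp1 Hp2 Hne ((pu q + pv q) / 2)). lra.
  - intros q1 q2 Hq1 Hq2 Hne y Hy.
    apply in_flat_map in Hq1 as [p1 [Hp1 Hq1]], Hq2 as [p2 [Hp2 Hq2]].
    pose proof (HSb p1 q1 Hp1 Hq1). pose proof (HSb p2 q2 Hp2 Hq2).
    destruct (classic (p1 = p2)) as [<-|Hpne].
    + exact (proj1 (proj2 (proj2 (HS p1 Hp1))) q1 q2 Hq1 Hq2 Hne y Hy).
    + apply (H3 p1 p2 Hp1 Hp2 Hpne y). lra.
  - intros y. rewrite H4. split.
    + intros [p [Hp Hy]]. destruct (proj1 (proj2 (proj2 (proj2 (HS p Hp))) y) Hy)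
        as [q [Hq Hqy]].
      exists q. split; auto. apply in_flat_map. now exists p.
    + intros [q [Hq Hy]]. apply in_flat_map in Hq as [p [Hp Hq]].
      specialize (HSb p q Hp Hq). exists p. split; auto. lra.
Qed.

Lemma fine_mono (delta d : R -> R) P : (forall x, delta x <= d x) -> fine delta P -> fine d P.
Proof. intros Hle Hfine u v x Hp. specialize (Hfine u v x Hp). specialize (Hle x). lra. Qed.

Lemma pdec_cases (Q : Prop) : (pdec Q = true /\ Q) \/ (pdec Q = false /\ ~ Q).
Proof. unfold pdec. destruct (excluded_middle_informative Q); auto. Qed.

Lemma pdec_true (Q : Prop) : Q -> pdec Q = true.
Proof. intros HQ. destruct (pdec_cases Q) as [[-> _]|[_ HnQ]]; tauto. Qed.

Lemma pdec_false (Q : Prop) : ~ Q -> pdec Q = false.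
Proof. intros HnQ. destruct (pdec_cases Q) as [[_ HQ]|[-> _]]; tauto. Qed.

Lemma ext_in E g x : E x -> ext E g x = 0.
Proof. intros Hx. unfold ext. now rewrite pdec_true. Qed.

Lemma ext_out E g x : ~ E x -> ext E g x = g x.
Proof. intros Hx. unfold ext. now rewrite pdec_false. Qed.

Lemma riemann_sum_lsum g P :
  riemann_sum g P = lsum (fun q => g (pt q) * (pv q - pu q)) P.
Proof. reflexivity. Qed.

Section Trim.

Variable E : R -> Prop.
Hypothesis HN : null_set E.

Definition pick_outside (u w : R) : R :=
  epsilon (inhabits 0) (fun y => u < y < w /\ ~ E y).

Lemma pick_outside_spec u w : u < w ->
  u < pick_outside u w < w /\ ~ E (pick_outside u w).
Proof.
  intros Huw. unfold pick_outside. apply epsilon_spec.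
  destruct (exists_notin_null_set E u w HN Huw) as [y Hy]. now exists y.
Qed.

Definition shrink_left (r u x : R) : R :=
  if pdec (E u) then pick_outside u (Rmin x (u + r)) else u.

Definition shrink_right (r v x : R) : R :=
  if pdec (E v) then pick_outside (Rmax x (v - r)) v else v.

Definition cap_left (u w : R) : list (R * R * R) :=
  if pdec (E u) then (u, w, u) :: nil else nil.

Definition cap_right (w v : R) : list (R * R * R) :=
  if pdec (E v) then (w, v, v) :: nil else nil.

(* A pair whose tag avoids E is split into short caps at those endpoints
   lying in E, tagged there, and a middle pair whose endpoints avoid E: the
   middle pair is controlled by differentiability at its tag, the caps are
   absorbed by the restricted sum. *)
Definition trim (r : R) (p : R * R * R) : list (R * R * R) :=
  if pdec (E (pt p)) then p :: nil else
  let u' := shrink_left r (pu p) (pt p) in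
  let v' := shrink_right r (pv p) (pt p) in
  cap_left (pu p) u' ++ (u', v', pt p) :: cap_right v' (pv p).

Lemma shrink_left_spec r u x : 0 < r -> u <= x -> ~ E x ->
  let u' := shrink_left r u x in
  u <= u' <= x /\ u' < u + r /\ ~ E u' /\ (E u /\ u < u' < x \/ ~ E u /\ u' = u).
Proof.
  intros Hr Hux Hx u'. unfold u', shrink_left.
  destruct (pdec_cases (E u)) as [[-> Hu]|[-> Hu]].
  - assert (Hux' : u < Rmin x (u + r)).
    { apply Rmin_glb_lt; [|lra]. destruct Hux as [|<-]; tauto. }
    destruct (pick_outside_spec _ _ Hux') as [Hw Hout].
    pose proof (Rmin_l x (u + r)). pose proof (Rmin_r x (u + r)).
    split; [lra|]. split; [lra|]. split; [exact Hout|]. left. split; [exact Hu|lra].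
  - split; [lra|]. split; [lra|]. split; [exact Hu|]. now right.
Qed.

Lemma shrink_right_spec r v x : 0 < r -> x <= v -> ~ E x ->
  let v' := shrink_right r v x in
  x <= v' <= v /\ v - r < v' /\ ~ E v' /\ (E v /\ x < v' < v \/ ~ E v /\ v' = v).
Proof.
  intros Hr Hxv Hx v'. unfold v', shrink_right.
  destruct (pdec_cases (E v)) as [[-> Hv]|[-> Hv]].
  - assert (Hxv' : Rmax x (v - r) < v).
    { apply Rmax_lub_lt; [|lra]. destruct Hxv as [| ->]; tauto. }
    destruct (pick_outside_spec _ _ Hxv') as [Hw Hout].
    pose proof (Rmax_l x (v - r)). pose proof (Rmax_r x (v - r)).
    split; [lra|]. split; [lra|]. split; [exact Hout|]. left. split; [exact Hv|lra].
  - split; [lra|]. split; [lra|]. split; [exact Hv|]. now right.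
Qed.

Lemma partition_mem_cap_left u w b P : (E u /\ u < w \/ ~ E u /\ w = u) -> w < b ->
  tagged_partition_mem w b P -> tagged_partition_mem u b (cap_left u w ++ P).
Proof.
  unfold cap_left. intros [[Hu Huw]|[Hu ->]] Hwb HP.
  - rewrite pdec_true by exact Hu.
    apply (partition_mem_app _ _ w); auto. apply partition_mem_single; lra.
  - now rewrite pdec_false.
Qed.

Lemma partition_mem_cap_right a w v P : (E v /\ w < v \/ ~ E v /\ w = v) -> a < w ->
  tagged_partition_mem a w P -> tagged_partition_mem a v (P ++ cap_right w v).
Proof.
  unfold cap_right. intros [[Hv Hwv]|[Hv ->]] Haw HP.
  - rewrite pdec_true by exact Hv.
    apply (partition_mem_app _ _ w); auto. apply partition_mem_single; lra.
  - rewrite pdec_false by exact Hv. now rewrite app_nil_r.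
Qed.

Lemma trim_partition_mem r p : 0 < r ->
  pu p < pv p -> pu p <= pt p <= pv p ->
  tagged_partition_mem (pu p) (pv p) (trim r p).
Proof.
  destruct p as [[u v] x]. unfold pu, pv, pt, trim. cbn. intros Hr Huv Hx.
  destruct (pdec_cases (E x)) as [[-> _]|[-> HEx]]; [now apply partition_mem_single|].
  destruct (shrink_left_spec r u x Hr (proj1 Hx) HEx) as [Hu' [_ [_ Hcl]]].
  destruct (shrink_right_spec r v x Hr (proj2 Hx) HEx) as [Hv' [_ [_ Hcr]]].
  set (u' := shrink_left r u x) in *. set (v' := shrink_right r v x) in *.
  assert (Hlt : u' < v') by (destruct Hcl as [[_ H1]|[_ H1]], Hcr as [[_ H2]|[_ H2]]; lra).
  apply partition_mem_cap_left; [destruct Hcl as [[? []]|]; auto|lra|].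
  apply (partition_mem_cap_right u' v' v ((u', v', x) :: nil));
    [destruct Hcr as [[? []]|]; auto|exact Hlt|].
  apply partition_mem_single; lra.
Qed.

Lemma trim_fine (d : R -> R) r p : 0 < r ->
  r <= d (pu p) -> r <= d (pv p) -> pu p <= pt p <= pv p ->
  fine d (p :: nil) -> fine d (trim r p).
Proof.
  destruct p as [[u v] x]. unfold pu, pv, pt, trim. cbn.
  intros Hr Hdu Hdv Hx Hfine.
  destruct (pdec_cases (E x)) as [[-> _]|[-> HEx]]; [exact Hfine|].
  destruct (Hfine u v x (in_eq _ _)) as [Hfu Hfv].
  destruct (shrink_left_spec r u x Hr (proj1 Hx) HEx) as [Hu' [Hul _]].
  destruct (shrink_right_spec r v x Hr (proj2 Hx) HEx) as [Hv' [Hvr _]].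
  unfold cap_left, cap_right.
  intros u0 v0 x0 Hq. apply in_app_or in Hq. destruct Hq as [Hq|[Hq|Hq]].
  - destruct (pdec (E u)); [|destruct Hq]. destruct Hq as [Hq|[]].
    injection Hq as <- <- <-. lra.
  - injection Hq as <- <- <-. lra.
  - destruct (pdec (E v)); [|destruct Hq]. destruct Hq as [Hq|[]].
    injection Hq as <- <- <-. lra.
Qed.

Lemma trim_outside r p q : 0 < r -> pu p <= pt p <= pv p ->
  In q (trim r p) -> ~ E (pt q) ->
  pt q = pt p /\ pu p <= pu q /\ pv q <= pv p /\ ~ E (pu q) /\ ~ E (pv q).
Proof.
  destruct p as [[u v] x]. unfold pu, pv, pt, trim. cbn. intros Hr Hx Hq HEq.
  destruct (pdec_cases (E x)) as [[Hd HEx]|[Hd HEx]]; rewrite Hd in Hq.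
  - destruct Hq as [<-|[]]. contradiction.
  - unfold cap_left, cap_right in Hq. apply in_app_or in Hq.
    destruct Hq as [Hq|[<-|Hq]].
    + destruct (pdec_cases (E u)) as [[Hu HEu]|[Hu _]]; rewrite Hu in Hq;
        [destruct Hq as [<-|[]]|destruct Hq]. contradiction.
    + destruct (shrink_left_spec r u x Hr (proj1 Hx) HEx) as [Hu' [_ [Hnu _]]].
      destruct (shrink_right_spec r v x Hr (proj2 Hx) HEx) as [Hv' [_ [Hnv _]]].
      cbn. repeat split; auto; lra.
    + destruct (pdec_cases (E v)) as [[Hv HEv]|[Hv _]]; rewrite Hv in Hq;
        [destruct Hq as [<-|[]]|destruct Hq]. contradiction.
Qed.

Lemma trim_riemann_sum g r p : 0 < r -> pu p <= pt p <= pv p ->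
  Rabs (ext E g (pt p) * (pv p - pu p) - riemann_sum (ext E g) (trim r p))
    <= 2 * Rabs (g (pt p)) * r.
Proof.
  destruct p as [[u v] x]. unfold pu, pv, pt, trim. cbn. intros Hr Hx.
  pose proof (Rabs_pos (g x)).
  destruct (pdec_cases (E x)) as [[-> HEx]|[-> HEx]].
  { rewrite riemann_sum_lsum, lsum_cons. cbn.
    replace (_ - _) with 0 by ring. rewrite Rabs_R0. nra. }
  destruct (shrink_left_spec r u x Hr (proj1 Hx) HEx) as [Hu' [Hul _]].
  destruct (shrink_right_spec r v x Hr (proj2 Hx) HEx) as [Hv' [Hvr _]].
  set (u' := shrink_left r u x) in *. set (v' := shrink_right r v x) in *.
  assert (Hcaps : riemann_sum (ext E g) (cap_left u u') = 0 /\
                  riemann_sum (ext E g) (cap_right v' v) = 0).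
  { unfold cap_left, cap_right. split;
      [destruct (pdec_cases (E u)) as [[-> Hin]|[-> _]]
      |destruct (pdec_cases (E v)) as [[-> Hin]|[-> _]]];
      cbn; try rewrite ext_in by exact Hin; ring. }
  rewrite !riemann_sum_lsum, lsum_app, lsum_cons, <- !riemann_sum_lsum.
  destruct Hcaps as [-> ->]. cbn. rewrite !ext_out by exact HEx.
  replace (_ - _) with (g x * ((u' - u) + (v - v'))) by ring.
  rewrite Rabs_mult, (Rabs_pos_eq (u' - u + (v - v'))) by lra.
  replace (2 * Rabs (g x) * r) with (Rabs (g x) * (r + r)) by ring.
  apply Rmult_le_compat_l; lra.
Qed.

End Trim.

Section Refine.

Variable E : R -> Prop.
Hypothesis HN : null_set E.

Definition refinement (r : R * R * R -> R) (P : list (R * R * R)) : list (R * R * R) :=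
  flat_map (fun p => trim E (r p) p) P.

Variables (a b : R) (P : list (R * R * R)) (r : R * R * R -> R).
Hypothesis HP : tagged_partition_mem a b P.
Hypothesis Hr : forall p, In p P -> 0 < r p.

Lemma refinement_partition_mem : tagged_partition_mem a b (refinement r P).
Proof.
  apply partition_mem_flat_map; auto. intros p Hp.
  destruct (proj1 HP p Hp). now apply trim_partition_mem; auto.
Qed.

Lemma refinement_fine (d : R -> R) : fine d P ->
  (forall p, In p P -> r p <= d (pu p) /\ r p <= d (pv p)) -> fine d (refinement r P).
Proof.
  intros Hfine Hrd u v x Hq. apply in_flat_map in Hq as [[[u0 v0] x0] [Hp Hq]].
  destruct (proj1 HP _ Hp) as [_ Htag]. destruct (Hrd _ Hp).
  refine (trim_fine E HN d _ _ (Hr _ Hp) _ _ Htag _ u v x Hq); auto.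
  intros u1 v1 x1 [Heq|[]]. injection Heq as <- <- <-. exact (Hfine _ _ _ Hp).
Qed.

Lemma refinement_outside (d : R -> R) q : fine d P -> In q (refinement r P) -> ~ E (pt q) ->
  ~ E (pu q) /\ ~ E (pv q) /\ pt q - d (pt q) < pu q /\ pv q < pt q + d (pt q).
Proof.
  intros Hfine Hq HEq. apply in_flat_map in Hq as [[[u v] x] [Hp Hq]].
  destruct (proj1 HP _ Hp) as [_ Htag].
  destruct (trim_outside E HN _ _ q (Hr _ Hp) Htag Hq HEq) as [Ht [Hu [Hv [Hnu Hnv]]]].
  destruct (Hfine u v x Hp). cbn in *. rewrite Ht. repeat split; auto; lra.
Qed.

Lemma refinement_riemann_sum g :
  Rabs (riemann_sum (ext E g) P - riemann_sum (ext E g) (refinement r P))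
    <= lsum (fun p => 2 * Rabs (g (pt p)) * r p) P.
Proof.
  unfold refinement. rewrite !riemann_sum_lsum, lsum_flat_map, lsum_minus.
  eapply Rle_trans; [apply lsum_abs|]. apply lsum_le. intros p Hp.
  rewrite <- riemann_sum_lsum.
  exact (trim_riemann_sum E HN g _ _ (Hr p Hp) (proj2 (proj1 HP p Hp))).
Qed.

End Refine.

Lemma derivative_gauge (D : R -> Prop) F f e : deriv_on D F f -> 0 < e ->
  exists d : R -> R, (forall x, 0 < d x) /\
    forall x y, D x -> D y -> Rabs (y - x) < d x ->
      Rabs (F y - F x - f x * (y - x)) <= e * Rabs (y - x).
Proof.
  intros Hder He.
  destruct (choice (fun x d => 0 < d /\ (D x -> forall y, D y -> Rabs (y - x) < d ->
      Rabs (F y - F x - f x * (y - x)) <= e * Rabs (y - x)))) as [d Hd].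
  - intros x. destruct (classic (D x)) as [Hx|Hx].
    + destruct (Hder x Hx e He) as [d Hd]. exists d. split; [apply Hd|intros _; apply Hd].
    + exists 1. split; [lra|tauto].
  - exists d. split; [intros x; apply Hd|]. intros x y Hx. now apply Hd.
Qed.

Lemma straddle_estimate F f x u v e : u <= x <= v ->
  Rabs (F u - F x - f x * (u - x)) <= e * Rabs (u - x) ->
  Rabs (F v - F x - f x * (v - x)) <= e * Rabs (v - x) ->
  Rabs (F v - F u - f x * (v - u)) <= e * (v - u).
Proof.
  intros Hx Hu Hv.
  rewrite (Rabs_left1 (u - x)), Ropp_minus_distr in Hu by lra.
  rewrite (Rabs_pos_eq (v - x)) in Hv by lra.
  replace (F v - F u - f x * (v - u))
    with ((F v - F x - f x * (v - x)) - (F u - F x - f x * (u - x))) by ring.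
  eapply Rle_trans; [apply Rabs_triang|]. rewrite Rabs_Ropp. nra.
Qed.

Definition restr_term (E : R -> Prop) (G : R -> R) (q : R * R * R) : R :=
  if pdec ((exists y, pu q <= y <= pv q /\ E y) /\ E (pt q)) then G (pv q) - G (pu q) else 0.

Lemma restr_sum_lsum E G P : restr_sum E G P = lsum (restr_term E G) P.
Proof. reflexivity. Qed.

Lemma restr_term_in E G q : pu q <= pt q <= pv q -> E (pt q) ->
  restr_term E G q = G (pv q) - G (pu q).
Proof. intros Hq HE. unfold restr_term. rewrite pdec_true; [reflexivity|eauto]. Qed.

Lemma restr_term_out E G q : ~ E (pt q) -> restr_term E G q = 0.
Proof. intros HE. unfold restr_term. rewrite pdec_false; [reflexivity|tauto]. Qed.

Section Defect.

Variables (a b : R) (E : R -> Prop) (F f : R -> R) (e : R) (d : R -> R).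
Hypotheses (Hab : a < b) (HEa : ~ E a) (HEb : ~ E b) (He : 0 <= e).
Hypothesis Hd : forall x y, a <= x <= b /\ ~ E x -> a <= y <= b /\ ~ E y ->
  Rabs (y - x) < d x -> Rabs (F y - F x - f x * (y - x)) <= e * Rabs (y - x).

Lemma piece_defect q : a <= pu q -> pv q <= b -> pu q <= pt q <= pv q ->
  (~ E (pt q) -> ~ E (pu q) /\ ~ E (pv q) /\
     pt q - d (pt q) < pu q /\ pv q < pt q + d (pt q)) ->
  Rabs (ext E F (pv q) - ext E F (pu q) - restr_term E (ext E F) q
        - ext E f (pt q) * (pv q - pu q)) <= e * (pv q - pu q).
Proof.
  intros Ha Hb Hq Hout. destruct (classic (E (pt q))) as [HE|HE].
  - rewrite restr_term_in, (ext_in E f) by assumption.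
    replace (_ - _) with 0 by ring. rewrite Rabs_R0.
    apply Rmult_le_pos; lra.
  - destruct (Hout HE) as [Hu [Hv [Hdu Hdv]]].
    rewrite restr_term_out, !ext_out by auto. rewrite Rminus_0_r.
    apply straddle_estimate; [exact Hq| |]; apply Hd;
      try (split; [lra|assumption]); [rewrite Rabs_left1|rewrite Rabs_pos_eq]; lra.
Qed.

Lemma partition_defect Q : tagged_partition_mem a b Q ->
  (forall q, In q Q -> ~ E (pt q) -> ~ E (pu q) /\ ~ E (pv q) /\
     pt q - d (pt q) < pu q /\ pv q < pt q + d (pt q)) ->
  Rabs (F b - F a - restr_sum E (ext E F) Q - riemann_sum (ext E f) Q) <= e * (b - a).
Proof.
  intros HQ Hout.
  rewrite <- (ext_out E F b HEb), <- (ext_out E F a HEa).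
  rewrite <- (partition_mem_telescope (ext E F) a b Q Hab HQ).
  replace (b - a) with (lsum (fun q => pv q - pu q) Q)
    by exact (partition_mem_telescope (fun y => y) a b Q Hab HQ).
  rewrite restr_sum_lsum, riemann_sum_lsum, !lsum_minus, <- lsum_scal.
  eapply Rle_trans; [apply lsum_abs|]. apply lsum_le. intros q Hq.
  destruct (partition_mem_bounds _ _ _ HQ q Hq).
  apply piece_defect; auto. exact (proj2 (proj1 HQ q Hq)).
Qed.

End Defect.

Section Estimate.

Variables (a b : R) (E : R -> Prop) (F f : R -> R).
Hypotheses (Hab : a < b) (HN : null_set E) (HEa : ~ E a) (HEb : ~ E b).
Hypothesis Hder : deriv_on (fun x => a <= x <= b /\ ~ E x) F f.

Lemma refinement_estimate eps dB : 0 < eps -> gauge a b dB ->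
  exists delta, gauge a b delta /\ forall P, tagged_partition a b P -> fine delta P ->
    exists P', tagged_partition a b P' /\ fine dB P' /\
      Rabs (riemann_sum (ext E f) P + restr_sum E (ext E F) P' - (F b - F a)) <= eps.
Proof.
  intros Heps HdB.
  destruct (derivative_gauge _ F f (eps / (2 * (b - a))) Hder) as [d [Hdpos Hd]].
  { apply Rdiv_lt_0_compat; lra. }
  exists (fun x => Rmin (dB x) (d x)). split; [intros x Hx; apply Rmin_glb_lt; auto|].
  intros P HP Hfine. apply tagged_partition_memE in HP.
  pose proof (fine_mono _ _ P (fun x => Rmin_l (dB x) (d x)) Hfine) as HfineB.
  pose proof (fine_mono _ _ P (fun x => Rmin_r (dB x) (d x)) Hfine) as Hfined.
  destruct (small_radii (fun p => 2 * Rabs (f (pt p))) (fun p => Rmin (dB (pu p)) (dB (pv p)))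
              P (eps / 2)) as [r [Hr Hsum]].
  { lra. }
  { intros p. pose proof (Rabs_pos (f (pt p))). lra. }
  { intros p Hp. destruct (partition_mem_bounds _ _ _ HP p Hp). destruct (proj1 HP p Hp).
    apply Rmin_glb_lt; apply HdB; lra. }
  assert (Hrpos : forall p, In p P -> 0 < r p) by (intros p Hp; apply Hr, Hp).
  exists (refinement E r P). split; [|split].
  - apply tagged_partition_memE. now apply refinement_partition_mem.
  - apply (refinement_fine E HN a b); auto. intros p Hp. destruct (Hr p Hp) as [_ Hrd].
    pose proof (Rmin_l (dB (pu p)) (dB (pv p))). pose proof (Rmin_r (dB (pu p)) (dB (pv p))).
    lra.
  - pose proof (refinement_riemann_sum E HN a b P r HP Hrpos f) as Hriem.
    assert (He : 0 <= eps / (2 * (b - a))) by (apply Rlt_le, Rdiv_lt_0_compat; lra).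
    pose proof (partition_defect a b E F f _ d Hab HEa HEb He Hd (refinement E r P)
      (refinement_partition_mem E HN a b P r HP Hrpos)
      (fun q Hq => refinement_outside E HN a b P r HP Hrpos d q Hfined Hq)) as Hdef.
    replace (eps / (2 * (b - a)) * (b - a)) with (eps / 2) in Hdef by (field; lra).
    set (X := riemann_sum (ext E f) P) in *.
    set (Y := riemann_sum (ext E f) (refinement E r P)) in *.
    set (Z := restr_sum E (ext E F) (refinement E r P)) in *.
    replace (X + Z - (F b - F a)) with ((X - Y) - (F b - F a - Z - Y)) by ring.
    eapply Rle_trans; [apply Rabs_triang|]. rewrite Rabs_Ropp. lra.
Qed.

End Estimate.

Theorem theorem1 (a b : R) (E : R -> Prop) (F f : R -> R) (Re : R) :
  a < b ->
  (forall x, E x -> a <= x <= b) ->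
  null_set E ->
  ~ E a -> ~ E b ->
  deriv_on (fun x => a <= x <= b /\ ~ E x) F f ->
  BS_delta a b E F Re ->
  exists I, GR_integral a b (ext E f) I /\ F b - F a = I + Re.
Proof.
  intros Hab _ HN HEa HEb Hder HBS.
  exists (F b - F a - Re). split; [|ring]. intros eps Heps.
  destruct (HBS (eps / 2)) as [dB [HdB HBS_dB]]; [lra|].
  destruct (refinement_estimate a b E F f Hab HN HEa HEb Hder (eps / 2) dB)
    as [delta [Hdelta Hrefine]]; [lra|exact HdB|].
  exists delta. split; [exact Hdelta|]. intros P HP Hfine.
  destruct (Hrefine P HP Hfine) as [P' [HP' [Hfine' Hest]]].
  specialize (HBS_dB P' HP' Hfine').
  set (Z := restr_sum E (ext E F) P') in *.
  replace (riemann_sum (ext E f) P - (F b - F a - Re))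
    with ((riemann_sum (ext E f) P + Z - (F b - F a)) - (Z - Re)) by ring.
  eapply Rle_lt_trans; [apply Rabs_triang|]. rewrite Rabs_Ropp. lra.
Qed.
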